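(* Let $\mathbf Q$ be a stabilizer group on $n$ qubits with independent generating set $\mathrm{gen}(\mathbf Q)$ of Hermitian Pauli operators, $H_{\mathbf Q}=-\sum_{g\in\mathrm{gen}(\mathbf Q)}g$, and $\Delta_{\mathrm{gap}}:=2$ (twice the minimal coefficient of $H_{\mathbf Q}$). Let $V=-\sum_{P\in\mathbf P(V)}w_P P$ with $\mathbf P(V)$ a set of Hermitian Pauli operators and $w_P>0$, and $H=H_{\mathbf Q}+V$. Let $V_\perp=-\sum_{P\in\mathbf P(V)\setminus C(\mathbf Q)}w_P P$ and assume $V_\perp\neq0$. Assume: (i) there is a state $|\psi'_{\mathbf Q}\rangle\in V_{\mathbf Q}$ with $\langle\psi'_{\mathbf Q}|V_\perp^2|\psi'_{\mathbf Q}\rangle\neq0$; (ii) $\sum_{P\in\mathbf P(V)\setminus\mathbf Q}w_P<\Delta_{\mathrm{gap}}-2\sum_{P\in\mathbf P(V)\cap\mathbf Q}w_P$. For $\lambda\ge0$ let $|\psi'_{\mathbf Q}(\lambda)\rangle=\big(|\psi'_{\mathbf Q}\rangle-\lambda V_\perp|\psi'_{\mathbf Q}\rangle\big)/\big\||\psi'_{\mathbf Q}\rangle-\lambda V_\perp|\psi'_{\mathbf Q}\rangle\big\|$ and $\Delta E(\lambda)=\langle\psi'_{\mathbf Q}|H|\psi'_{\mathbf Q}\rangle-\langle\psi'_{\mathbf Q}(\lambda)|H|\psi'_{\mathbf Q}(\lambda)\rangle$. Then there exists $\lambda_{\max}>0$ such that $\Delta E(\lambda)$ is strictly positive and monotonically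 increasing for all $0<\lambda<\lambda_{\max}$.
   Context: A stabilizer group is an abelian subgroup of the $n$-qubit Pauli group $\{\pm1,\pm i\}\cdot\{\mathbb 1,X,Y,Z\}^{\otimes n}$ not containing $-\mathbb 1$; its code space is $V_{\mathbf Q}=\{|\psi\rangle: q|\psi\rangle=|\psi\rangle\ \forall q\in\mathbf Q\}$. $C(\mathbf Q)$ denotes the set of Pauli operators commuting with every element of $\mathbf Q$ (the Pauli centralizer). *)

From HB Require Import structures.
From mathcomp Require Import all_boot all_order all_algebra.
From mathcomp Require Import complex.
From mathcomp Require Import boolp.
Set Implicit Arguments.
Unset Strict Implicit.
Unset Printing Implicit Defensive.
Import Order.TTheory GRing.Theory Num.Theory.
Local Open Scope ring_scope.

(* The Hilbert space of n qubits is
   C^(2^n); basis index i : 'I_(2^n), bit k of i is odd (i %/ 2^k). *)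

(* single-qubit Pauli matrices, a = 0,1,2,3 <-> 1, X, Y, Z;
   entry (b,c) with b the row bit and c the column bit *)
Definition sigma (R : rcfType) (a : 'I_4) (b c : bool) : R[i] :=
  match val a with
  | 0 => (b == c)%:R
  | 1 => (b != c)%:R
  | 2 => if b == c then 0 else if b then 'i else - 'i
  | _ => if b == c then (if b then -1 else 1) else 0
  end.

Definition qbit (n : nat) (k : 'I_n) (i : 'I_(2 ^ n)) : bool := odd (i %/ 2 ^ k).

(* the Pauli operator  i^c * sigma_{p 0} (x) ... (x) sigma_{p (n-1)} *)
Definition pauli_mx (R : rcfType) (n : nat) (c : 'I_4) (p : 'I_n -> 'I_4)
  : 'M[R[i]]_(2 ^ n) :=
  \matrix_(i, j) ('i ^+ c * \prod_(k < n) sigma R (p k) (qbit k i) (qbit k j)).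

Definition is_pauli (R : rcfType) (n : nat) (M : 'M[R[i]]_(2 ^ n)) : Prop :=
  exists (c : 'I_4) (p : 'I_n -> 'I_4), M = pauli_mx R c p.

Definition adj (R : rcfType) (m k : nat) (M : 'M[R[i]]_(m, k)) : 'M[R[i]]_(k, m) :=
  (map_mx (fun x => x^*) M)^T.

Definition hermitian (R : rcfType) (m : nat) (M : 'M[R[i]]_m) : Prop := adj M = M.

Definition is_herm_pauli (R : rcfType) (n : nat) (M : 'M[R[i]]_(2 ^ n)) : Prop :=
  is_pauli M /\ hermitian M.

Definition is_stabilizer_group (R : rcfType) (n : nat)
    (Q : 'M[R[i]]_(2 ^ n) -> Prop) : Prop :=
  (forall q, Q q -> is_pauli q) /\
  Q 1%:M /\
  (forall q1 q2, Q q1 -> Q q2 -> Q (q1 *m q2)) /\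
  (forall q, Q q -> Q (invmx q)) /\
  (forall q1 q2, Q q1 -> Q q2 -> q1 *m q2 = q2 *m q1) /\
  ~ Q (- 1%:M).

Definition gen_group (R : rcfType) (n : nat) (gen : seq 'M[R[i]]_(2 ^ n))
    (M : 'M[R[i]]_(2 ^ n)) : Prop :=
  exists s : seq 'M[R[i]]_(2 ^ n),
    (forall x, x \in s -> exists2 g, g \in gen & (x = g \/ x = invmx g))
    /\ M = foldr mulmx 1%:M s.

Definition gen_independent (R : rcfType) (n : nat) (gen : seq 'M[R[i]]_(2 ^ n))
  : Prop :=
  uniq gen /\ forall g, g \in gen -> ~ gen_group (rem g gen) g.

Definition in_centralizer (R : rcfType) (n : nat) (Q : 'M[R[i]]_(2 ^ n) -> Prop)
    (P : 'M[R[i]]_(2 ^ n)) : Prop :=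
  is_pauli P /\ forall q, Q q -> P *m q = q *m P.

Definition in_code_space (R : rcfType) (n : nat) (Q : 'M[R[i]]_(2 ^ n) -> Prop)
    (psi : 'cV[R[i]]_(2 ^ n)) : Prop :=
  forall q, Q q -> q *m psi = psi.

Definition HQ (R : rcfType) (n : nat) (gen : seq 'M[R[i]]_(2 ^ n)) : 'M[R[i]]_(2 ^ n) :=
  - \sum_(g <- gen) g.

Definition Vop (R : rcfType) (n : nat) (PV : seq 'M[R[i]]_(2 ^ n))
    (w : 'M[R[i]]_(2 ^ n) -> R) : 'M[R[i]]_(2 ^ n) :=
  - \sum_(P <- PV) real_complex R (w P) *: P.

Definition Vperp (R : rcfType) (n : nat) (Q : 'M[R[i]]_(2 ^ n) -> Prop)
    (PV : seq 'M[R[i]]_(2 ^ n)) (w : 'M[R[i]]_(2 ^ n) -> R) : 'M[R[i]]_(2 ^ n) :=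
  - \sum_(P <- PV | `[< ~ in_centralizer Q P >]) real_complex R (w P) *: P.

Definition expect (R : rcfType) (m : nat) (A : 'M[R[i]]_m) (u : 'cV[R[i]]_m) : R[i] :=
  (adj u *m A *m u) ord0 ord0.

Definition vnorm (R : rcfType) (m : nat) (u : 'cV[R[i]]_m) : R[i] :=
  sqrtC ((adj u *m u) ord0 ord0).

Definition psi_lambda (R : rcfType) (m : nat) (Vp : 'M[R[i]]_m)
    (psi : 'cV[R[i]]_m) (l : R) : 'cV[R[i]]_m :=
  let phi := psi - real_complex R l *: (Vp *m psi) in (vnorm phi)^-1 *: phi.

Definition DeltaE (R : rcfType) (m : nat) (H Vp : 'M[R[i]]_m)
    (psi : 'cV[R[i]]_m) (l : R) : R[i] :=
  expect H psi - expect H (psi_lambda Vp psi l).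

Definition Delta_gap (R : rcfType) : R := 2.

(* A Pauli operator P outside the centralizer C(Q) anticommutes with some generator g
   (Pauli operators commute or anticommute, qubit by qubit), so for code states chi, phi
     <chi|P|phi> = <chi|P g|phi> = - <g chi|P|phi> = - <chi|P|phi> = 0.
   Hence u := V_perp psi satisfies <psi|u> = 0 and, since H - V_perp commutes with Q
   and thus preserves the code space, <psi|H|u> = <u|u> =: B > 0.  Expanding the energy
   of the normalised psi - lambda u then gives, with E = <psi|H|psi> and G = <u|H|u>,
     DeltaE(lambda) = (2 B lambda + (E B - G) lambda^2) / (1 + B lambda^2),
   which is positive and nondecreasing for small lambda > 0. *)

From Pilot Require Import Defs.
From HB Require Import structures.
From mathcomp Require Import all_boot all_order all_algebra.
From mathcomp Require Import complex.
From mathcomp Require Import boolp.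
From mathcomp Require Import ring lra.
Import Order.TTheory GRing.Theory Num.Theory.
Set Implicit Arguments.
Unset Strict Implicit.
Unset Printing Implicit Defensive.
Local Open Scope complex_scope.
Local Open Scope ring_scope.

Lemma sum_prod_bits (T : comPzSemiRingType) (n : nat) (f : 'I_n -> bool -> T) :
  \sum_(i < 2 ^ n) \prod_(k < n) f k (odd (i %/ 2 ^ k)) =
  \prod_(k < n) (f k false + f k true).
Proof.
elim: n f => [|n IHn] f; first by rewrite big_ord1 !big_ord0.
rewrite big_ord_recl /= -(IHn (fun k => f (lift ord0 k))) big_distrr /= expnSr.
rewrite -(big_mkord xpredT (fun i => \prod_(k < n.+1) f k (odd (i %/ 2 ^ k)))).
rewrite -(big_mkord xpredT
          (fun i => _ * \prod_(k < n) f (lift ord0 k) (odd (i %/ 2 ^ k)))).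
rewrite big_nat_mul; apply: eq_bigr => i _.
rewrite mulSn addnC addn2 big_nat_recl // big_nat1 mulrDl.
have oddS : odd (i * 2).+1 by rewrite -addn1 oddD oddM andbF.
have halfS : ((i * 2).+1 %/ 2 = i)%N by rewrite -addn1 divnMDl // addn0.
rewrite !big_ord_recl /= !expn0 !divn1 oddS oddM andbF.
by congr (_ * _ + _ * _); apply: eq_bigr => k _;
  rewrite /bump leq0n add1n expnS divnMA ?halfS ?mulnK.
Qed.

Definition sigma_anticomm (a b : 'I_4) : bool := [&& val a != 0, val b != 0 & a != b]%N.

Lemma sigma_mulC (R : rcfType) (a b : 'I_4) (x y : bool) :
  \sum_(z : bool) sigma R a x z * sigma R b z y =
  (-1) ^+ sigma_anticomm a b * \sum_(z : bool) sigma R b x z * sigma R a z y.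
Proof.
have sqr_i : 'i * 'i = -1 :> R[i] by rewrite -expr2 sqrCi.
rewrite !big_bool.
case: a => [[|[|[|[|a]]]] a_lt4] //; case: b => [[|[|[|[|b]]]] b_lt4] //;
  case: x; case: y; rewrite /sigma /sigma_anticomm /=;
  by rewrite ?(mul0r, mulr0, mul1r, mulr1, add0r, addr0, mulrN, mulNr, opprK,
               oppr0, sqr_i, expr0, expr1).
Qed.

Lemma pauli_mulmxE (R : rcfType) (n : nat) c p c' p' (i j : 'I_(2 ^ n)) :
  (pauli_mx R c p *m pauli_mx R c' p') i j =
  'i ^+ c * 'i ^+ c' * \prod_(k < n)
     \sum_(z : bool) sigma R (p k) (qbit k i) z * sigma R (p' k) z (qbit k j).
Proof.
rewrite !mxE; under eq_bigr => l _ do rewrite !mxE mulrACA -big_split /=.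
rewrite -big_distrr /= (sum_prod_bits (fun k z => sigma R (p k) (qbit k i) z
                                               * sigma R (p' k) z (qbit k j))).
by congr (_ * _); apply: eq_bigr => k _; rewrite big_bool addrC.
Qed.

Lemma pauli_comm_or_anticomm (R : rcfType) (n : nat) (A B : 'M[R[i]]_(2 ^ n)) :
  is_pauli A -> is_pauli B -> A *m B = B *m A \/ A *m B = - (B *m A).
Proof.
move=> [c [p ->]] [c' [p' ->]].
set s : R[i] := \prod_(k < n) (-1) ^+ sigma_anticomm (p k) (p' k).
have sign_s : s = 1 \/ s = -1.
  apply: (big_ind (fun x : R[i] => x = 1 \/ x = -1)); first by left.
    by move=> _ _ [->|->] [->|->]; rewrite ?mul1r ?mulN1r ?opprK; by [left | right].
  by move=> k _; case: sigma_anticomm; [right | left].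
have AB_BA i j : (pauli_mx R c p *m pauli_mx R c' p') i j =
                 s * (pauli_mx R c' p' *m pauli_mx R c p) i j.
  rewrite !pauli_mulmxE; under eq_bigr => k _ do rewrite sigma_mulC.
  by rewrite big_split /= mulrCA [_ * 'i ^+ c]mulrC.
case: sign_s => s_val; [left | right]; apply/matrixP => i j;
  by rewrite AB_BA s_val ?mul1r // mulN1r [in RHS]mxE.
Qed.

Section Adjoint.
Variable R : rcfType.

Lemma adjK m k (M : 'M[R[i]]_(m, k)) : adj (adj M) = M.
Proof. by apply/matrixP => i j; rewrite !mxE conjCK. Qed.

Lemma adjM m k l (A : 'M[R[i]]_(m, k)) (B : 'M[R[i]]_(k, l)) :
  adj (A *m B) = adj B *m adj A.
Proof.
apply/matrixP => i j; rewrite !mxE rmorph_sum; apply: eq_bigr => x _.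
by rewrite !mxE rmorphM mulrC.
Qed.

Lemma adjD m k (A B : 'M[R[i]]_(m, k)) : adj (A + B) = adj A + adj B.
Proof. by apply/matrixP => i j; rewrite !mxE rmorphD. Qed.

Lemma adjN m k (A : 'M[R[i]]_(m, k)) : adj (- A) = - adj A.
Proof. by apply/matrixP => i j; rewrite !mxE rmorphN. Qed.

Lemma adjZ m k c (A : 'M[R[i]]_(m, k)) : adj (c *: A) = c^* *: adj A.
Proof. by apply/matrixP => i j; rewrite !mxE rmorphM. Qed.

Lemma adj0 m k : adj (0 : 'M[R[i]]_(m, k)) = 0.
Proof. by apply/matrixP => i j; rewrite !mxE rmorph0. Qed.

Lemma conj_real_complex (x : R) : (x%:C)^* = x%:C.
Proof. by apply: conj_Creal; apply/complex_realP; exists x. Qed.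

Lemma hermitianN m (A : 'M[R[i]]_m) : Defs.hermitian A -> Defs.hermitian (- A).
Proof. by rewrite /Defs.hermitian adjN => ->. Qed.

Lemma hermitianD m (A B : 'M[R[i]]_m) :
  Defs.hermitian A -> Defs.hermitian B -> Defs.hermitian (A + B).
Proof. by rewrite /Defs.hermitian adjD => -> ->. Qed.

Lemma hermitianZ_real m (x : R) (A : 'M[R[i]]_m) :
  Defs.hermitian A -> Defs.hermitian (x%:C *: A).
Proof. by rewrite /Defs.hermitian adjZ conj_real_complex => ->. Qed.

Lemma hermitian_sum m (I : Type) (r : seq I) (P : pred I) (F : I -> 'M[R[i]]_m) :
  (forall j, P j -> Defs.hermitian (F j)) -> Defs.hermitian (\sum_(j <- r | P j) F j).
Proof.
move=> hF; apply: (big_ind (@Defs.hermitian R m)) => //; first exact: adj0.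
exact: hermitianD.
Qed.

Definition braket m (u v : 'cV[R[i]]_m) : R[i] := (adj u *m v) ord0 ord0.

Lemma expectE m (A : 'M[R[i]]_m) u : expect A u = braket u (A *m u).
Proof. by rewrite /expect /braket mulmxA. Qed.

Lemma braket_hermitian m (A : 'M[R[i]]_m) u v :
  Defs.hermitian A -> braket u (A *m v) = braket (A *m u) v.
Proof. by move=> A_herm; rewrite /braket adjM A_herm mulmxA. Qed.

Lemma conj_braket m (u v : 'cV[R[i]]_m) : (braket u v)^* = braket v u.
Proof. by rewrite /braket -[in RHS](adjK u) -adjM !mxE. Qed.

Lemma braket_ge0 m (u : 'cV[R[i]]_m) : 0 <= braket u u.
Proof.
rewrite /braket mxE; apply: sumr_ge0 => k _; rewrite !mxE mulrC.
exact: mul_conjC_ge0.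
Qed.

Lemma braketDl m (u v w : 'cV[R[i]]_m) : braket (u + v) w = braket u w + braket v w.
Proof. by rewrite /braket adjD mulmxDl mxE. Qed.

Lemma braketNl m (u v : 'cV[R[i]]_m) : braket (- u) v = - braket u v.
Proof. by rewrite /braket adjN mulNmx mxE. Qed.

Lemma braketZl m c (u v : 'cV[R[i]]_m) : braket (c *: u) v = c^* * braket u v.
Proof. by rewrite /braket adjZ -scalemxAl mxE. Qed.

Lemma braketDr m (u v w : 'cV[R[i]]_m) : braket u (v + w) = braket u v + braket u w.
Proof. by rewrite /braket mulmxDr mxE. Qed.

Lemma braketNr m (u v : 'cV[R[i]]_m) : braket u (- v) = - braket u v.
Proof. by rewrite /braket mulmxN mxE. Qed.

Lemma braketZr m c (u v : 'cV[R[i]]_m) : braket u (c *: v) = c * braket u v.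
Proof. by rewrite /braket -scalemxAr mxE. Qed.

Lemma braket_sumr m (I : Type) (r : seq I) (P : pred I) (F : I -> 'cV[R[i]]_m) u :
  braket u (\sum_(j <- r | P j) F j) = \sum_(j <- r | P j) braket u (F j).
Proof. by rewrite /braket mulmx_sumr summxE. Qed.

End Adjoint.

Lemma quadratic_pos_near0 (F : realFieldType) (a b d : F) : 0 < a -> 0 <= d ->
  exists2 t, 0 < t & forall x y, 0 <= x -> x < t -> 0 <= y -> y < t ->
    0 < a + b * (x + y) - a * d * (x * y).
Proof.
move=> a_gt0 d_ge0.
have b_abs := normr_ge0 b; have b_ge := ler_norm (- b); rewrite normrN in b_ge.
have ad_ge0 : 0 <= a * d by apply: mulr_ge0 => //; exact: ltW.
have K_gt0 : 0 < 8 * `|b| + 4 * a * d + a by lra.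
(* This t makes both |b| (x + y) and a d x y at most a / 4. *)
exists (a / (8 * `|b| + 4 * a * d + a)); first exact: divr_gt0.
set t := a / _.
have tK : t * (8 * `|b| + 4 * a * d + a) = a by rewrite /t divfK // gt_eqF.
have t_le1 : t <= 1 by rewrite /t ler_pdivrMr // mul1r; lra.
move=> x y x_ge0 x_lt y_ge0 y_lt.
have bxy : - (`|b| * (x + y)) <= b * (x + y) by rewrite -mulNr ler_wpM2r //; lra.
have bt : `|b| * (x + y) <= `|b| * (2 * t) by apply: ler_wpM2l => //; lra.
have xy_le : x * y <= t by nra.
have adxy : a * d * (x * y) <= a * d * t by exact: ler_wpM2l.
nra.
Qed.

Lemma ratio_pos_nondecreasing_near0 (F : realFieldType) (a b d : F) :
  0 < a -> 0 <= d ->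
  exists2 t, 0 < t & forall l1 l2, 0 < l1 -> l1 <= l2 -> l2 < t ->
    0 < (a * l1 + b * l1 ^+ 2) / (1 + d * l1 ^+ 2) <=
        (a * l2 + b * l2 ^+ 2) / (1 + d * l2 ^+ 2).
Proof.
move=> a_gt0 d_ge0; have [t t_gt0 quad_pos] := quadratic_pos_near0 b a_gt0 d_ge0.
exists t => // l1 l2 l1_gt0 l12 l2_lt.
have den_gt0 l : 0 < 1 + d * l ^+ 2 by have := sqr_ge0 l; nra.
have l1_lt : l1 < t by exact: le_lt_trans l2_lt.
have pos12 := quad_pos l1 l2 (ltW l1_gt0) l1_lt (le_trans (ltW l1_gt0) l12) l2_lt.
have pos1 := quad_pos l1 0 (ltW l1_gt0) l1_lt (lexx 0) t_gt0.
apply/andP; split.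
  apply: divr_gt0 => //; rewrite addr0 !mulr0 subr0 in pos1; nra.
rewrite -subr_ge0.
have den1 := den_gt0 l1; have den2 := den_gt0 l2.
have -> : (a * l2 + b * l2 ^+ 2) / (1 + d * l2 ^+ 2)
          - (a * l1 + b * l1 ^+ 2) / (1 + d * l1 ^+ 2)
        = (l2 - l1) * (a + b * (l1 + l2) - a * d * (l1 * l2))
          / ((1 + d * l1 ^+ 2) * (1 + d * l2 ^+ 2)).
  by field; rewrite ?gt_eqF.
by apply: divr_ge0; [apply: mulr_ge0; lra | apply: mulr_ge0; exact: ltW].
Qed.

Lemma real_complex_of_conj (R : rcfType) (x : R[i]) :
  x^* = x -> exists k : R, x = k%:C.
Proof. by move=> x_real; apply/complex_realP/CrealP. Qed.

Section FirstOrderPerturbation.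
Variables (R : rcfType) (m : nat) (H Vp : 'M[R[i]]_m) (psi : 'cV[R[i]]_m).
Hypothesis H_herm : Defs.hermitian H.
Hypotheses (psi_unit : braket psi psi = 1) (psi_Vp : braket psi (Vp *m psi) = 0).
Hypothesis psi_H_Vp : braket psi (H *m (Vp *m psi)) = braket (Vp *m psi) (Vp *m psi).
Let u := Vp *m psi.

Lemma DeltaE_ratio (E B G : R) :
  braket psi (H *m psi) = E%:C -> braket u u = B%:C -> braket u (H *m u) = G%:C ->
  forall l,
  DeltaE H Vp psi l = ((2 * B * l + (E * B - G) * l ^+ 2) / (1 + B * l ^+ 2))%:C.
Proof.
move=> E_def B_def G_def l.
have B_ge0 : 0 <= B by rewrite -lecR -B_def braket_ge0.
set lc := l%:C; set phi := psi - lc *: u.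
have lc_real : lc^* = lc by exact: conj_real_complex.
have u_psi : braket u psi = 0 by rewrite -conj_braket psi_Vp conjC0.
have u_H_psi : braket u (H *m psi) = B%:C.
  by rewrite braket_hermitian // -conj_braket psi_H_Vp B_def conj_real_complex.
have phi_phi : braket phi phi = (1 + B * l ^+ 2)%:C.
  rewrite /phi braketDl braketNl braketZl !braketDr !braketNr !braketZr.
  rewrite psi_unit psi_Vp u_psi B_def lc_real.
  by rewrite !(rmorphD, rmorph1, rmorphM, rmorphXn) -/lc; ring.
have phi_H_phi : braket phi (H *m phi) = (E - 2 * l * B + l ^+ 2 * G)%:C.
  rewrite /phi mulmxDr mulmxN -scalemxAr braketDl braketNl braketZl.
  rewrite !braketDr !braketNr !braketZr E_def psi_H_Vp B_def u_H_psi G_def lc_real.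
  by rewrite !(rmorphD, rmorphB, rmorphM, rmorphXn, rmorph_nat) -/lc; ring.
have N_gt0 : 0 < 1 + B * l ^+ 2 by have := sqr_ge0 l; nra.
set c := (sqrtC (1 + B * l ^+ 2)%:C)^-1.
have c_real : c^* = c.
  by apply: geC0_conj; rewrite invr_ge0 sqrtC_ge0 lecR ltW.
have cc : c * c = ((1 + B * l ^+ 2)^-1)%:C.
  by rewrite -expr2 exprVn sqrtCK fmorphV.
rewrite /DeltaE /psi_lambda /vnorm /= !expectE -/u -/lc -/phi -/(braket phi phi).
rewrite phi_phi -/c -scalemxAr braketZr braketZl c_real mulrA cc phi_H_phi E_def.
rewrite -!rmorphM -rmorphB; congr (_%:C); field.
by rewrite gt_eqF.
Qed.

Lemma DeltaE_pos_nondecreasing_near0 : braket u u != 0 ->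
  exists2 lmax : R, 0 < lmax & forall l1 l2, 0 < l1 -> l1 <= l2 -> l2 < lmax ->
    0 < DeltaE H Vp psi l1 <= DeltaE H Vp psi l2.
Proof.
move=> u_neq0.
have [E E_def] : exists E, braket psi (H *m psi) = E%:C.
  by apply: real_complex_of_conj; rewrite conj_braket -braket_hermitian.
have [B B_def] : exists B, braket u u = B%:C.
  by apply: real_complex_of_conj; rewrite conj_braket.
have [G G_def] : exists G, braket u (H *m u) = G%:C.
  by apply: real_complex_of_conj; rewrite conj_braket -braket_hermitian.
have B_gt0 : 0 < B by rewrite -ltcR -B_def lt0r u_neq0 braket_ge0.
have two_B_gt0 : 0 < 2 * B by rewrite mulr_gt0.
have [t t_gt0 incr] := ratio_pos_nondecreasing_near0 (E * B - G) two_B_gt0 (ltW B_gt0).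
exists t => // l1 l2 l1_gt0 l12 l2_lt.
rewrite !(DeltaE_ratio E_def B_def G_def) ltcR lecR.
exact: incr.
Qed.

End FirstOrderPerturbation.

Lemma comm_mx_invmx (F : comUnitRingType) (m : nat) (A B : 'M[F]_m) :
  comm_mx A B -> comm_mx A (invmx B).
Proof.
rewrite /comm_mx; have [B_unit AB | /invmx_out -> //] := boolP (B \in unitmx).
rewrite -[LHS](mulKmx B_unit) -[RHS](mulKmx B_unit); congr (_ *m _).
by rewrite mulmxA -AB -mulmxA mulmxV // mulmx1 mulKVmx.
Qed.

Lemma code_space_mulmx (R : rcfType) (n : nat) (Q : 'M[R[i]]_(2 ^ n) -> Prop) A psi :
  (forall q, Q q -> comm_mx q A) -> in_code_space Q psi ->
  in_code_space Q (A *m psi).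
Proof. by move=> commA code_psi q Qq; rewrite mulmxA commA // -mulmxA code_psi. Qed.

Definition Vcent (R : rcfType) (n : nat) (Q : 'M[R[i]]_(2 ^ n) -> Prop)
    (PV : seq 'M[R[i]]_(2 ^ n)) (w : 'M[R[i]]_(2 ^ n) -> R) : 'M[R[i]]_(2 ^ n) :=
  - \sum_(P <- PV | `[< in_centralizer Q P >]) (w P)%:C *: P.

Lemma Vop_split (R : rcfType) (n : nat) (Q : 'M[R[i]]_(2 ^ n) -> Prop) PV w :
  Vop PV w = Vcent Q PV w + Vperp Q PV w.
Proof.
rewrite /Vop /Vcent /Vperp (bigID (fun P => `[< in_centralizer Q P >])) /= opprD.
by congr (_ + - _); apply: eq_bigl => P; rewrite asbool_neg.
Qed.

Section StabilizerCode.
Variables (R : rcfType) (n : nat) (gen : seq 'M[R[i]]_(2 ^ n)).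
Variables (PV : seq 'M[R[i]]_(2 ^ n)) (w : 'M[R[i]]_(2 ^ n) -> R).
Hypothesis gen_herm : forall g, g \in gen -> is_herm_pauli g.
Hypothesis PV_herm : forall P, P \in PV -> is_herm_pauli P.
Hypothesis Q_abelian :
  forall q1 q2, gen_group gen q1 -> gen_group gen q2 -> comm_mx q1 q2.

Lemma gen_group_mem g : g \in gen -> gen_group gen g.
Proof.
move=> gen_g; exists [:: g]; split; last by rewrite /= mulmx1.
by move=> x; rewrite inE => /eqP ->; exists g => //; left.
Qed.

Lemma comm_mx_gen_group A :
  (forall g, g \in gen -> comm_mx A g) -> forall q, gen_group gen q -> comm_mx A q.
Proof.
move=> commA q [s [s_gen ->]]; elim: s s_gen => [|x s IHs] s_gen /=.
  exact: comm_mx1.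
apply: comm_mxM; last by apply: IHs => y s_y; apply: s_gen; rewrite inE s_y orbT.
have [g gen_g [->|->]] := s_gen x (mem_head x s); first exact: commA.
exact/comm_mx_invmx/commA.
Qed.

Lemma braket_code_space_noncentral P chi phi :
  is_pauli P -> ~ in_centralizer (gen_group gen) P ->
  in_code_space (gen_group gen) chi -> in_code_space (gen_group gen) phi ->
  braket chi (P *m phi) = 0.
Proof.
move=> pauli_P noncentral code_chi code_phi.
have [g gen_g anti_gP] : exists2 g, g \in gen & P *m g = - (g *m P).
  apply: contra_notP noncentral => no_anti; split=> //.
  apply: comm_mx_gen_group => g gen_g.
  have [//|anti] := pauli_comm_or_anticomm pauli_P (proj1 (gen_herm gen_g)).
  by case: no_anti; exists g.
have [_ herm_g] := gen_herm gen_g.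
have g_Q := gen_group_mem gen_g.
have : braket chi (P *m phi) = - braket chi (P *m phi).
  rewrite -{1}(code_phi g g_Q) mulmxA anti_gP mulNmx braketNr -mulmxA.
  by rewrite (braket_hermitian _ _ herm_g) code_chi.
by move/eqP; rewrite eq_sym eqNr => /eqP.
Qed.

Lemma braket_code_space_Vperp chi psi :
  in_code_space (gen_group gen) chi -> in_code_space (gen_group gen) psi ->
  braket chi (Vperp (gen_group gen) PV w *m psi) = 0.
Proof.
move=> code_chi code_psi.
rewrite /Vperp mulNmx mulmx_suml braketNr braket_sumr big_seq_cond big1 ?oppr0 //.
move=> P /andP [PV_P /asboolP noncentral].
rewrite -scalemxAl braketZr braket_code_space_noncentral ?mulr0 //.
by case: (PV_herm PV_P).
Qed.

Lemma hermitian_weighted_sum (C : pred 'M[R[i]]_(2 ^ n)) :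
  Defs.hermitian (- \sum_(P <- PV | C P) (w P)%:C *: P).
Proof.
apply: hermitianN; rewrite big_seq_cond; apply: hermitian_sum => P /andP [PV_P _].
by apply: hermitianZ_real; case: (PV_herm PV_P).
Qed.

Lemma hermitian_Vperp Q : Defs.hermitian (Vperp Q PV w).
Proof. exact: hermitian_weighted_sum. Qed.

Lemma hermitian_H : Defs.hermitian (HQ gen + Vop PV w).
Proof.
apply: hermitianD; last exact: hermitian_weighted_sum xpredT.
apply: hermitianN; rewrite big_seq; apply: hermitian_sum => g gen_g.
by case: (gen_herm gen_g).
Qed.

Lemma code_space_HQ_Vcent psi : in_code_space (gen_group gen) psi ->
  in_code_space (gen_group gen) ((HQ gen + Vcent (gen_group gen) PV w) *m psi).
Proof.
move=> code_psi; apply: code_space_mulmx code_psi => q Qq.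
apply: comm_mxD; apply: comm_mxN.
  rewrite big_seq; apply: comm_mx_sum => g gen_g.
  exact: Q_abelian Qq (gen_group_mem gen_g).
apply: comm_mx_sum => P /asboolP [_ PQ].
by rewrite /comm_mx -scalemxAl -scalemxAr PQ.
Qed.

Lemma braket_code_space_H_Vperp psi : in_code_space (gen_group gen) psi ->
  let u := Vperp (gen_group gen) PV w *m psi in
  braket psi ((HQ gen + Vop PV w) *m u) = braket u u.
Proof.
move=> code_psi u; rewrite (braket_hermitian _ _ hermitian_H).
rewrite (Vop_split (gen_group gen)) addrA mulmxDl braketDl.
rewrite braket_code_space_Vperp ?add0r //.
exact: code_space_HQ_Vcent.
Qed.

End StabilizerCode.

Theorem lemma4 (R : rcfType) (n : nat)
  (gen : seq 'M[R[i]]_(2 ^ n)) (PV : seq 'M[R[i]]_(2 ^ n))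
  (w : 'M[R[i]]_(2 ^ n) -> R) :
  is_stabilizer_group (gen_group gen) ->
  (forall g, g \in gen -> is_herm_pauli g) ->
  gen_independent gen ->
  uniq PV ->
  (forall P, P \in PV -> is_herm_pauli P) ->
  (forall P, P \in PV -> 0 < w P) ->
  Vperp (gen_group gen) PV w != 0 ->
  \sum_(P <- PV | `[< ~ gen_group gen P >]) w P
    < Delta_gap R - 2 * \sum_(P <- PV | `[< gen_group gen P >]) w P ->
  forall psi : 'cV[R[i]]_(2 ^ n),
    in_code_space (gen_group gen) psi ->
    expect 1%:M psi = 1 ->
    expect (Vperp (gen_group gen) PV w *m Vperp (gen_group gen) PV w) psi != 0 ->
    exists lmax : R, 0 < lmax /\
      (forall l : R, 0 < l -> l < lmax ->
         0 < DeltaE (HQ gen + Vop PV w) (Vperp (gen_group gen) PV w) psi l) /\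
      (forall l1 l2 : R, 0 < l1 -> l1 <= l2 -> l2 < lmax ->
         DeltaE (HQ gen + Vop PV w) (Vperp (gen_group gen) PV w) psi l1
         <= DeltaE (HQ gen + Vop PV w) (Vperp (gen_group gen) PV w) psi l2).
Proof.
move=> [_ [_ [_ [_ [Q_abelian _]]]]] gen_herm _ _ PV_herm _ _ _ psi code_psi.
rewrite !expectE mul1mx -mulmxA.
rewrite (braket_hermitian _ _ (hermitian_Vperp w PV_herm _)) => psi_unit u_neq0.
have [lmax lmax_gt0 incr] := DeltaE_pos_nondecreasing_near0
  (hermitian_H w gen_herm PV_herm) psi_unit
  (braket_code_space_Vperp w gen_herm PV_herm code_psi code_psi)
  (braket_code_space_H_Vperp w gen_herm PV_herm Q_abelian code_psi) u_neq0.
exists lmax; split; first exact: lmax_gt0.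
split=> [l l_gt0 l_lt | l1 l2 l1_gt0 l12 l2_lt].
  exact: proj1 (andP (incr l l l_gt0 (lexx l) l_lt)).
exact: proj2 (andP (incr l1 l2 l1_gt0 l12 l2_lt)).
Qed.
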